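(* Let $(x_0,x_1)$ be a state of nonnegative integers with $ch(x_0,x_1)\geq 1$ and $x_1\geq x_0-1\geq 1$. Then there exists a legal question $(a_0,a_1)$ such that, whichever answer Carole gives, the next state $(y_0,y_1)$ satisfies (i) $\lfloor x_0/2\rfloor\leq y_0\leq\lceil x_0/2\rceil$; (ii) $y_1\geq y_0-1$; (iii) $ch(y_0,y_1)\geq ch(x_0,x_1)-1$.
   Context: Liar game with $1$ lie: a state is a pair $(x_0,x_1)$ of nonnegative integers; a legal question is a pair $(a_0,a_1)$ of integers with $0\leq a_i\leq x_i$; after Carole's answer Y the next state is $(a_0,\,a_1+x_0-a_0)$, after N it is $(x_0-a_0,\,x_1-a_1+a_0)$. Weight: $wt_q(x_0,x_1)=(q+1)x_0+x_1$. The character $ch(x_0,x_1)$ is the maximum integer $q\geq 0$ such that $wt_q(x_0,x_1)\geq 2^q$. *)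

From mathcomp Require Import all_boot.
Set Implicit Arguments. Unset Strict Implicit. Unset Printing Implicit Defensive.

(* Liar game with 1 lie. States and questions are pairs of nats. *)
Definition legal (x0 x1 a0 a1 : nat) : bool := (a0 <= x0) && (a1 <= x1).

(* next state after answer Y (b = true) or N (b = false) *)
Definition next_state (x0 x1 a0 a1 : nat) (b : bool) : nat * nat :=
  if b then (a0, a1 + (x0 - a0)) else (x0 - a0, x1 - a1 + a0).

Definition wt (q x0 x1 : nat) : nat := q.+1 * x0 + x1.

(* No q >= x0+x1+2
   satisfies the inequality, so the maximum over q < x0+x1+2 is the true
   maximum (when some q qualifies, i.e. x0+x1 >= 1; for the state (0,0)
   no q qualifies and this returns 0). *)
Definition ch (x0 x1 : nat) : nat :=
  \max_(q < (x0 + x1).+2 | 2 ^ q <= wt q x0 x1) q.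

From mathcomp Require Import all_boot zify.

Set Implicit Arguments.
Unset Strict Implicit.
Unset Printing Implicit Defensive.

(* Ask for half of the truthful candidates, and choose a1 so that the two
   possible answers leave states whose weights of order [ch - 1] differ by at
   most one.  By conservation of weight these two weights add up to the
   weight of order [ch] of the current state, which is at least [2 ^ ch], so
   each of them is at least [2 ^ (ch - 1)].  Such an a1 exists because a
   large character forces x1 to be large compared with ch. *)

Lemma sqr_le_exp2 n : 4 <= n -> n ^ 2 <= 2 ^ n.
Proof.
move=> /subnK <-; elim: (n - 4) => [|m IHm] //.
by rewrite addSn [2 ^ _]expnS; nia.
Qed.

Lemma exp2_le_wt_ltn k x0 x1 : 2 ^ k <= wt k x0 x1 -> k < (x0 + x1).+2.
Proof.
rewrite /wt ltnNge => le_2k_wt; apply/negP => lt_k.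
have [le4k|] := leqP 4 k; first by have := sqr_le_exp2 le4k; nia.
by case: k le_2k_wt lt_k => [|[|[|[|]]]] //; rewrite !expnS; nia.
Qed.

Lemma leq_ch k x0 x1 : 2 ^ k <= wt k x0 x1 -> k <= ch x0 x1.
Proof.
move=> le_2k_wt; have lt_k := exp2_le_wt_ltn le_2k_wt.
exact: (@leq_bigmax_cond _ (fun i : 'I__ => 2 ^ i <= wt i x0 x1) val (Ordinal lt_k)).
Qed.

Lemma exp2_ch_le_wt x0 x1 : 2 ^ ch x0 x1 <= wt (ch x0 x1) x0 x1 \/ ch x0 x1 = 0.
Proof.
rewrite /ch; apply: (big_ind (fun q => 2 ^ q <= wt q x0 x1 \/ q = 0)) => //.
- by right.
- by move=> p q; rewrite /maxn; case: ltnP.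
- by move=> q; left.
Qed.

Lemma wt_next_state_sum k x0 x1 a0 a1 : legal x0 x1 a0 a1 ->
  wt k a0 (a1 + (x0 - a0)) + wt k (x0 - a0) (x1 - a1 + a0) = wt k.+1 x0 x1.
Proof. by rewrite /legal /wt => /andP[]; nia. Qed.

Lemma exp2_le_wt_leq_x1 k x0 x1 :
  x0 <= x1 + 1 -> 2 ^ k.+1 <= wt k.+1 x0 x1 -> k <= x1 + 1.
Proof.
rewrite /wt leqNgt expnS => le_x0 le_2k_wt; apply/negP => lt_x1.
have [le4k|] := leqP 4 k; first by have := sqr_le_exp2 le4k; nia.
by case: k le_2k_wt lt_x1 => [|[|[|[|]]]] //; rewrite !expnS; nia.
Qed.

Lemma legal_halving_question k x0 x1 :
  k * odd x0 <= x1 + 1 -> legal x0 x1 x0./2 (x1 + k * odd x0)./2.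
Proof.
move=> le_kx1; have := odd_double_half x0; have := odd_double_half (x1 + k * odd x0).
by rewrite /legal; lia.
Qed.

Lemma wt_halving_question k x0 x1 (a0 := x0./2) (a1 := (x1 + k * odd x0)./2) :
  k * odd x0 <= x1 + 1 ->
  wt k (x0 - a0) (x1 - a1 + a0) = wt k a0 (a1 + (x0 - a0)) + odd (x1 + k * odd x0).
Proof.
rewrite /wt /a0 /a1 => le_kx1.
have := odd_double_half x0; have := odd_double_half (x1 + k * odd x0).
by case: (odd x0) le_kx1 => /=; case: odd => /=; nia.
Qed.

Theorem lemma13 (x0 x1 : nat) :
  1 <= ch x0 x1 -> 2 <= x0 -> x0 <= x1 + 1 ->
  exists a0 a1 : nat, legal x0 x1 a0 a1 /\
    forall (b : bool) (y0 y1 : nat), next_state x0 x1 a0 a1 b = (y0, y1) ->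
      [/\ x0./2 <= y0 <= uphalf x0,
          y0 <= y1 + 1 &
          ch x0 x1 <= ch y0 y1 + 1].
Proof.
move=> ch_gt0 _ le_x0.
have [|] := exp2_ch_le_wt x0 x1; last by move=> ch0; rewrite ch0 in ch_gt0.
case: (ch x0 x1) ch_gt0 => // k _ le_2k_wt.
have le_kx1 : k * odd x0 <= x1 + 1.
  by have := exp2_le_wt_leq_x1 le_x0 le_2k_wt; case: odd; rewrite ?muln1 ?muln0.
have legal_q := legal_halving_question le_kx1.
have wt_sum := wt_next_state_sum k legal_q; have wtN := wt_halving_question le_kx1.
set a0 := x0./2 in legal_q wt_sum wtN *; set a1 := _./2 in legal_q wt_sum wtN *.
have wtY : 2 ^ k <= wt k a0 (a1 + (x0 - a0)).
  by move: le_2k_wt; rewrite -wt_sum wtN expnS; case: odd; lia.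
have {}wtN : 2 ^ k <= wt k (x0 - a0) (x1 - a1 + a0) by rewrite wtN (leq_trans wtY) ?leq_addr.
exists a0, a1; split => // b y0 y1.
have := odd_double_half x0; move: legal_q => /andP[_ le_a1] x0E.
rewrite uphalf_half [ch _ _ + 1]addn1 ltnS.
by case: b => -[<- <-]; split; rewrite ?leq_ch //; lia.
Qed.
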